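(* Let $\mathbb{E}$ be a finitely complete category, $\Sigma$ a fibrational class of split epimorphisms, and suppose $\mathbb{E}$ is a $\Sigma$-Mal'tsev category. Let $R$ be a reflexive relation and $S$ a $\Sigma$-relation on an object $X$ with $[R,S]=0$, and let $p\colon R\times_XS\to X$ be a connector. Write, for generalized elements $x,y,z\colon T\to X$ with $xRy$ and $ySz$, $p(xRySz)$ for the corresponding composite $T\to X$. Then: (1) (coherence) for all such $x,y,z$ one has $x\,S\,p(xRySz)$ and $p(xRySz)\,R\,z$; (2) (left associativity) for all $x,y,z,t$ with $xRySzSt$, one has $p(p(xRySz)RzSt)=p(xRySt)$; (3) (right associativity) if moreover $R$ is a preorder, then for all $x,y,z,t$ with $xRyRzSt$, one has $p(xRySp(yRzSt))=p(xRzSt)$.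
   Context: A split epimorphism is a pair $(f,s)$ with $fs=1$. A class $\Sigma$ of split epimorphisms is fibrational if it contains all split epimorphisms $(f,s)$ with $f$ invertible and is stable under pullback along any morphism. A pair of morphisms with common codomain $Z$ is jointly extremally epic if it factors jointly through no non-invertible monomorphism into $Z$. $\mathbb{E}$ is $\Sigma$-Mal'tsev if for every split epimorphism $(f,s)\colon X\rightleftarrows Y$ in $\Sigma$ and every split epimorphism $(g,t)$ with $g\colon Y'\to Y$, letting $X'=Y'\times_YX$, $s'=(1_{Y'},sg)$, $\bar t=(tf,1_X)$, the pair $(s',\bar t)$ is jointly extremally epic. A $\Sigma$-relation is a reflexive relation $(d_0,d_1)\colon S\rightarrowtail X\times X$ with reflexivity $s_0$ such that $(d_0,s_0)\in\Sigma$ (such $S$ is automatically transitive in a $\Sigma$-Mal'tsev category). For reflexive relations $R,S$ on $X$, $R\times_XS$ is the pullback of $d_0^S$ along $d_1^R$ (elements $xRySz$), $\sigma_0^R\colon R\to R\times_XS$, $xRy\mapsto xRySy$, and $\sigma_0^S\colon S\to R\times_XS$, $ySz\mapsto yRySz$. $[R,S]=0$ means there is a morphism $p\colon R\times_XS\to X$ (a connector) with $p\sigma_0^R=d_0^R$ and $p\sigma_0^S=d_1^S$, i.e. $p(xRySy)=x$, $p(yRySz)=z$. A preorder is a reflexive transitive relation. *)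

Set Implicit Arguments.
Unset Strict Implicit.

Record Cat := {
  Obj :> Type;
  Hom : Obj -> Obj -> Type;
  idm : forall A, Hom A A;
  comp : forall A B C, Hom B C -> Hom A B -> Hom A C;
  comp_id_l : forall A B (f : Hom A B), comp (idm B) f = f;
  comp_id_r : forall A B (f : Hom A B), comp f (idm A) = f;
  comp_assoc : forall A B C D (h : Hom C D) (g : Hom B C) (f : Hom A B),
      comp h (comp g f) = comp (comp h g) f
}.

Arguments Hom {c} _ _.
Arguments idm {c} A.
Arguments comp {c A B C} _ _.

Notation "g \o' f" := (comp g f) (at level 40, left associativity).

Section Defs.
Variable C : Cat.

Definition is_pullback {A B Z : C} (f : Hom A Z) (g : Hom B Z)
    {P : C} (p1 : Hom P A) (p2 : Hom P B) : Prop :=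
  f \o' p1 = g \o' p2 /\
  forall (Q : C) (q1 : Hom Q A) (q2 : Hom Q B), f \o' q1 = g \o' q2 ->
    exists u : Hom Q P, (p1 \o' u = q1 /\ p2 \o' u = q2) /\
      forall v : Hom Q P, p1 \o' v = q1 -> p2 \o' v = q2 -> v = u.

Definition is_terminal (T : C) : Prop :=
  forall A : C, exists u : Hom A T, forall v : Hom A T, v = u.

Definition finitely_complete : Prop :=
  (exists T : C, is_terminal T) /\
  forall (A B Z : C) (f : Hom A Z) (g : Hom B Z),
    exists (P : C) (p1 : Hom P A) (p2 : Hom P B), is_pullback f g p1 p2.

Definition is_mono {A B : C} (m : Hom A B) : Prop :=
  forall (T : C) (a b : Hom T A), m \o' a = m \o' b -> a = b.

Definition is_iso {A B : C} (f : Hom A B) : Prop :=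
  exists g : Hom B A, g \o' f = idm A /\ f \o' g = idm B.

Definition jointly_extremally_epic {A B Z : C} (a : Hom A Z) (b : Hom B Z)
  : Prop :=
  forall (M : C) (m : Hom M Z), is_mono m ->
    forall (a' : Hom A M) (b' : Hom B M), m \o' a' = a -> m \o' b' = b ->
      is_iso m.

(* a class of split epimorphisms (f, s) : X <=> Y, f : X -> Y, s : Y -> X *)
Definition SEClass : Type := forall X Y : C, Hom X Y -> Hom Y X -> Prop.

Definition fibrational (Sig : SEClass) : Prop :=
  (forall X Y (f : Hom X Y) (s : Hom Y X), Sig X Y f s -> f \o' s = idm Y) /\
  (forall X Y (f : Hom X Y) (s : Hom Y X), f \o' s = idm Y -> is_iso f ->
      Sig X Y f s) /\
  (forall X Y (f : Hom X Y) (s : Hom Y X), Sig X Y f s ->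
     forall (Y' : C) (g : Hom Y' Y) (P : C) (f' : Hom P Y') (g' : Hom P X),
       is_pullback g f f' g' ->
       forall s' : Hom Y' P, f' \o' s' = idm Y' -> g' \o' s' = s \o' g ->
         Sig P Y' f' s').

Definition sigma_maltsev (Sig : SEClass) : Prop :=
  forall X Y (f : Hom X Y) (s : Hom Y X), Sig X Y f s ->
  forall (Y' : C) (g : Hom Y' Y) (t : Hom Y Y'), g \o' t = idm Y ->
  forall (X' : C) (p1 : Hom X' Y') (p2 : Hom X' X), is_pullback g f p1 p2 ->
  forall (s' : Hom Y' X') (tb : Hom X X'),
    p1 \o' s' = idm Y' -> p2 \o' s' = s \o' g ->
    p1 \o' tb = t \o' f -> p2 \o' tb = idm X ->
    jointly_extremally_epic s' tb.

Definition jointly_monic {S X : C} (d0 d1 : Hom S X) : Prop :=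
  forall (T : C) (a b : Hom T S), d0 \o' a = d0 \o' b -> d1 \o' a = d1 \o' b ->
    a = b.

Record RRel (X : C) := {
  rel_obj : C;
  d0 : Hom rel_obj X;
  d1 : Hom rel_obj X;
  s0 : Hom X rel_obj;
  rel_mono : jointly_monic d0 d1;
  d0s0 : d0 \o' s0 = idm X;
  d1s0 : d1 \o' s0 = idm X
}.

Definition sigma_relation (Sig : SEClass) {X : C} (S : RRel X) : Prop :=
  Sig (rel_obj S) X (d0 S) (s0 S).

Definition relates {X : C} (R : RRel X) {T : C} (x y : Hom T X) : Prop :=
  exists w : Hom T (rel_obj R), d0 R \o' w = x /\ d1 R \o' w = y.

Definition is_transitive {X : C} (R : RRel X) : Prop :=
  forall (T : C) (x y z : Hom T X), relates R x y -> relates R y z ->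
    relates R x z.

(* a preorder: reflexive (built into RRel) and transitive *)
Definition is_preorder {X : C} (R : RRel X) : Prop := is_transitive R.

(* p : P -> X is a connector, where (pi1, pi2) : P -> R, S is a pullback of
   d0^S along d1^R (i.e. P = R x_X S);  p sigma0^R = d0^R, p sigma0^S = d1^S *)
Definition is_connector {X : C} (R S : RRel X) {P : C}
    (pi1 : Hom P (rel_obj R)) (pi2 : Hom P (rel_obj S)) (p : Hom P X) : Prop :=
  (forall sg : Hom (rel_obj R) P,
      pi1 \o' sg = idm (rel_obj R) -> pi2 \o' sg = s0 S \o' d1 R ->
      p \o' sg = d0 R) /\
  (forall sg : Hom (rel_obj S) P,
      pi1 \o' sg = s0 R \o' d0 S -> pi2 \o' sg = idm (rel_obj S) ->
      p \o' sg = d1 S).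

(* papp ... x y z v  means  "x R y S z and p(xRySz) = v" *)
Definition papp {X : C} (R S : RRel X) {P : C}
    (pi1 : Hom P (rel_obj R)) (pi2 : Hom P (rel_obj S)) (p : Hom P X)
    {T : C} (x y z v : Hom T X) : Prop :=
  exists (r : Hom T (rel_obj R)) (s : Hom T (rel_obj S)) (u : Hom T P),
    d0 R \o' r = x /\ d1 R \o' r = y /\ d0 S \o' s = y /\ d1 S \o' s = z /\
    pi1 \o' u = r /\ pi2 \o' u = s /\ p \o' u = v.

End Defs.

Arguments finitely_complete : clear implicits.

Set Implicit Arguments.
Unset Strict Implicit.

(* In a Sigma-Mal'tsev category the two canonical sections s' and tb of the
   pullback of a split epimorphism in Sigma along a split epimorphism are jointly
   extremally epic; since relations pull back to monomorphisms, a relation (in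
   particular equality) between two maps out of that pullback holds as soon as it
   holds after precomposition with s' and with tb.  Each claim is about a generic
   configuration living on such a pullback: R x_X S itself for coherence,
   (R x_X S) x_X S for left and (R x_X R) x_X S for right associativity.  On the
   two sections these configurations degenerate to x R y S y or y R y S z, where
   the connector laws p(xRySy) = x and p(yRySz) = z decide everything.  The same
   argument shows that the Sigma-relation S is transitive. *)

Lemma comp_rewrite {C : Cat} {A B D : C} (a : Hom B D) (b : Hom A B) (c : Hom A D) :
  a \o' b = c -> forall (Z : C) (k : Hom Z A), a \o' (b \o' k) = c \o' k.
Proof. intros E Z k. rewrite comp_assoc, E. reflexivity. Qed.

(* [cat_simpl (E1, ..., En)] right-associates composites and rewrites with the
   equations [Ei : a \o' b = c], also inside longer composites [a \o' (b \o' k)]. *)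
Ltac cat_norm :=
  repeat rewrite <- comp_assoc; repeat rewrite comp_id_l; repeat rewrite comp_id_r.
Ltac cat_norm_in H :=
  repeat rewrite <- comp_assoc in H; repeat rewrite comp_id_l in H;
  repeat rewrite comp_id_r in H.
Ltac cat_pass Es :=
  lazymatch Es with
  | (?Es', ?E) => cat_pass Es'; cat_pass E
  | ?E => repeat (first [rewrite E | rewrite (comp_rewrite E)]; cat_norm)
  end.
Ltac cat_pass_in Es H :=
  lazymatch Es with
  | (?Es', ?E) => cat_pass_in Es' H; cat_pass_in E H
  | ?E => repeat (first [rewrite E in H | rewrite (comp_rewrite E) in H]; cat_norm_in H)
  end.
Tactic Notation "cat_simpl" constr(Es) := cat_norm; repeat progress cat_pass Es.
Tactic Notation "cat_simpl" constr(Es) "in" hyp(H) :=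
  cat_norm_in H; repeat progress cat_pass_in Es H.

Section Category.
Variable C : Cat.

Lemma pullback_ext {A B Z P : C} (f : Hom A Z) (g : Hom B Z)
    (p1 : Hom P A) (p2 : Hom P B) :
  is_pullback f g p1 p2 -> forall (T : C) (u v : Hom T P),
  p1 \o' u = p1 \o' v -> p2 \o' u = p2 \o' v -> u = v.
Proof.
  intros [Hcomm Huniv] T u v E1 E2.
  destruct (Huniv T (p1 \o' u) (p2 \o' u)) as [w [_ Hw]].
  - rewrite !comp_assoc, Hcomm. reflexivity.
  - rewrite (Hw u), (Hw v); auto.
Qed.

Lemma pullback_pair {A B Z P : C} (f : Hom A Z) (g : Hom B Z)
    (p1 : Hom P A) (p2 : Hom P B) :
  is_pullback f g p1 p2 -> forall (T : C) (q1 : Hom T A) (q2 : Hom T B),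
  f \o' q1 = g \o' q2 -> exists u : Hom T P, p1 \o' u = q1 /\ p2 \o' u = q2.
Proof.
  intros [_ Huniv] T q1 q2 E.
  destruct (Huniv T q1 q2 E) as [u [Hu _]]. exists u. exact Hu.
Qed.

Lemma pullback_mono {A B Z P : C} (f : Hom A Z) (g : Hom B Z)
    (p1 : Hom P A) (p2 : Hom P B) :
  is_pullback f g p1 p2 -> is_mono g -> is_mono p1.
Proof.
  intros HP Hg T u v E. apply (pullback_ext HP); [exact E |].
  apply Hg. rewrite !comp_assoc, <- (proj1 HP), <- !comp_assoc, E. reflexivity.
Qed.

Lemma relates_comp {X T U : C} (Q : RRel X) (x y : Hom T X) (k : Hom U T) :
  relates Q x y -> relates Q (x \o' k) (y \o' k).
Proof.
  intros [w [E0 E1]]. exists (w \o' k). split; apply comp_rewrite; assumption.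
Qed.

Lemma relates_refl {X T : C} (Q : RRel X) (x : Hom T X) : relates Q x x.
Proof.
  exists (s0 Q \o' x). split; rewrite comp_assoc.
  - rewrite d0s0. apply comp_id_l.
  - rewrite d1s0. apply comp_id_l.
Qed.

Lemma relates_d0_d1 {X : C} (Q : RRel X) : relates Q (d0 Q) (d1 Q).
Proof. exists (idm _). split; apply comp_id_r. Qed.

Lemma jointly_monic_idm (X : C) : jointly_monic (idm X) (idm X).
Proof. intros T a b E _. rewrite !comp_id_l in E. exact E. Qed.

Definition diagonal (X : C) : RRel X := {|
  rel_obj := X; d0 := idm X; d1 := idm X; s0 := idm X;
  rel_mono := @jointly_monic_idm X;
  d0s0 := comp_id_l (idm X); d1s0 := comp_id_l (idm X) |}.

Lemma relates_diagonal {X T : C} (f g : Hom T X) :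
  relates (diagonal X) f g <-> f = g.
Proof.
  split.
  - intros [w [E0 E1]]. cbn in E0, E1. rewrite comp_id_l in E0, E1. congruence.
  - intros <-. apply relates_refl.
Qed.

Section FinitelyComplete.
Hypothesis FC : finitely_complete C.

Lemma product_self_exists (X : C) :
  exists (Pr : C) (pr1 pr2 : Hom Pr X), jointly_monic pr1 pr2 /\
    forall (T : C) (h k : Hom T X),
      exists u : Hom T Pr, pr1 \o' u = h /\ pr2 \o' u = k.
Proof.
  destruct FC as [[One HOne] Hpb].
  destruct (HOne X) as [tX _].
  destruct (Hpb _ _ _ tX tX) as [Pr [pr1 [pr2 HPr]]].
  exists Pr, pr1, pr2. split.
  - intros T. apply (pullback_ext HPr).
  - intros T h k. apply (pullback_pair HPr).
    destruct (HOne T) as [tT HtT]. rewrite (HtT (tX \o' h)), (HtT (tX \o' k)).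
    reflexivity.
Qed.

(* Pull the monomorphism (d0, d1) : Q >-> X x X back along (f, g): the pair
   (a, b) factors through the pulled-back mono, which is therefore invertible. *)
Lemma jointly_extremally_epic_relates {X G A B : C} (Q : RRel X)
    (a : Hom A G) (b : Hom B G) (f g : Hom G X) :
  jointly_extremally_epic a b ->
  relates Q (f \o' a) (g \o' a) -> relates Q (f \o' b) (g \o' b) -> relates Q f g.
Proof.
  intros J [wa [Ea0 Ea1]] [wb [Eb0 Eb1]].
  destruct (product_self_exists X) as [Pr [pr1 [pr2 [Hmonic Hpair]]]].
  destruct (Hpair _ (d0 Q) (d1 Q)) as [m [Em1 Em2]].
  destruct (Hpair _ f g) as [h [Eh1 Eh2]].
  destruct (proj2 FC _ _ _ h m) as [M [i [n HM]]].
  assert (Hm : is_mono m).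
  { intros T u v E. apply (rel_mono (r := Q)); [rewrite <- Em1 | rewrite <- Em2];
      rewrite <- !comp_assoc, E; reflexivity. }
  assert (Ha : h \o' a = m \o' wa)
    by (apply Hmonic; cat_simpl (Eh1, Eh2, Em1, Em2, Ea0, Ea1); reflexivity).
  assert (Hb : h \o' b = m \o' wb)
    by (apply Hmonic; cat_simpl (Eh1, Eh2, Em1, Em2, Eb0, Eb1); reflexivity).
  destruct (pullback_pair HM Ha) as [a' [Ea' _]].
  destruct (pullback_pair HM Hb) as [b' [Eb' _]].
  destruct (J M i (pullback_mono HM Hm) a' b' Ea' Eb') as [j [_ Ej]].
  exists (n \o' j).
  split; [rewrite <- Em1 | rewrite <- Em2];
    cat_simpl (eq_sym (proj1 HM), Ej, Eh1, Eh2); reflexivity.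
Qed.

Section SigmaMaltsev.
Variable Sig : SEClass C.
Hypotheses (Fib : fibrational Sig) (HM : sigma_maltsev Sig).

Section PullbackOfSplitEpi.
Variables (X Y Y' X' : C) (f : Hom X Y) (s : Hom Y X) (g : Hom Y' Y) (t : Hom Y Y')
  (p1 : Hom X' Y') (p2 : Hom X' X).
Hypotheses (Hfs : @Sig X Y f s) (Hgt : g \o' t = idm Y) (Hpb : is_pullback g f p1 p2).

Lemma maltsev_relates {Z : C} (Q : RRel Z) (h k : Hom X' Z) :
  (forall s' : Hom Y' X', p1 \o' s' = idm Y' -> p2 \o' s' = s \o' g ->
     relates Q (h \o' s') (k \o' s')) ->
  (forall tb : Hom X X', p1 \o' tb = t \o' f -> p2 \o' tb = idm X ->
     relates Q (h \o' tb) (k \o' tb)) ->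
  relates Q h k.
Proof.
  intros Hs' Htb.
  destruct (pullback_pair Hpb (q1 := idm Y') (q2 := s \o' g)) as [s' [Es1 Es2]].
  { rewrite comp_id_r, comp_assoc, (proj1 Fib _ _ _ _ Hfs), comp_id_l. reflexivity. }
  destruct (pullback_pair Hpb (q1 := t \o' f) (q2 := idm X)) as [tb [Et1 Et2]].
  { rewrite comp_id_r, comp_assoc, Hgt, comp_id_l. reflexivity. }
  apply (jointly_extremally_epic_relates (a := s') (b := tb)); auto.
  exact (HM Hfs Hgt Hpb Es1 Es2 Et1 Et2).
Qed.

Lemma maltsev_ext {Z : C} (h k : Hom X' Z) :
  (forall s' : Hom Y' X', p1 \o' s' = idm Y' -> p2 \o' s' = s \o' g ->
     h \o' s' = k \o' s') ->
  (forall tb : Hom X X', p1 \o' tb = t \o' f -> p2 \o' tb = idm X ->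
     h \o' tb = k \o' tb) ->
  h = k.
Proof.
  intros Hs' Htb. apply relates_diagonal, maltsev_relates;
    intros u E1 E2; apply relates_diagonal; auto.
Qed.

End PullbackOfSplitEpi.

Lemma sigma_relation_transitive {X : C} (S : RRel X) :
  sigma_relation Sig S -> is_transitive S.
Proof.
  intros HS T x y z [r [Er0 Er1]] [s [Es0 Es1]].
  destruct (proj2 FC _ _ _ (d1 S) (d0 S)) as [SS [q1 [q2 HSS]]].
  assert (Hgeneric : relates S (d0 S \o' q1) (d1 S \o' q2)).
  { apply (maltsev_relates HS (d1s0 S) HSS); intros u E1 E2.
    - cat_simpl (E1, E2, d1s0 S). apply relates_d0_d1.
    - cat_simpl (E1, E2, d0s0 S). apply relates_d0_d1. }
  destruct (pullback_pair HSS (q1 := r) (q2 := s)) as [k [Ek1 Ek2]]; [congruence |].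
  pose proof (relates_comp k Hgeneric) as Hk.
  cat_simpl (Ek1, Ek2, Er0, Es1) in Hk. exact Hk.
Qed.

Section Connector.
Variables (X : C) (R S : RRel X) (P : C) (pi1 : Hom P (rel_obj R))
  (pi2 : Hom P (rel_obj S)) (p : Hom P X).
Hypotheses (HS : sigma_relation Sig S) (HP : is_pullback (d1 R) (d0 S) pi1 pi2)
  (Hp : is_connector pi1 pi2 p).

Local Notation papp_p := (papp pi1 pi2 p).

Lemma papp_intro {T : C} (u : Hom T P) :
  papp_p (d0 R \o' (pi1 \o' u)) (d1 R \o' (pi1 \o' u)) (d1 S \o' (pi2 \o' u)) (p \o' u).
Proof.
  exists (pi1 \o' u), (pi2 \o' u), u. repeat split.
  rewrite !comp_assoc, (proj1 HP). reflexivity.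
Qed.

Lemma papp_elim {T : C} (x y z v : Hom T X) :
  papp_p x y z v -> exists u : Hom T P,
    d0 R \o' (pi1 \o' u) = x /\ d1 R \o' (pi1 \o' u) = y /\
    d1 S \o' (pi2 \o' u) = z /\ p \o' u = v.
Proof.
  intros [r [s [u [Ex [Ey [_ [Ez [Er [Es Ev]]]]]]]]].
  exists u. rewrite Er, Es. auto.
Qed.

Lemma papp_comp {T U : C} (x y z v : Hom T X) (k : Hom U T) :
  papp_p x y z v -> papp_p (x \o' k) (y \o' k) (z \o' k) (v \o' k).
Proof.
  intros [r [s [u [Ex [Ey [Ey' [Ez [Er [Es Ev]]]]]]]]].
  exists (r \o' k), (s \o' k), (u \o' k).
  repeat split; apply comp_rewrite; assumption.
Qed.

Lemma papp_relates {T : C} (x y z v : Hom T X) :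
  papp_p x y z v -> relates R x y /\ relates S y z.
Proof.
  intros [r [s [u [Ex [Ey [Ey' [Ez _]]]]]]]. split; [exists r | exists s]; auto.
Qed.

Lemma papp_total {T : C} (x y z : Hom T X) :
  relates R x y -> relates S y z -> exists v, papp_p x y z v.
Proof.
  intros [r [Ex Ey]] [s [Ey' Ez]].
  destruct (pullback_pair HP (q1 := r) (q2 := s)) as [u [Er Es]]; [congruence |].
  exists (p \o' u), r, s, u. auto 10.
Qed.

Lemma papp_unique {T : C} (x y z v v' : Hom T X) :
  papp_p x y z v -> papp_p x y z v' -> v = v'.
Proof.
  intros [r [s [u [Ex [Ey [Ey' [Ez [Er [Es Ev]]]]]]]]]
    [r' [s' [u' [Ex' [Ey1' [Ey2' [Ez' [Er' [Es' Ev']]]]]]]]].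
  assert (Err : r = r') by (apply (rel_mono (r := R)); congruence).
  assert (Ess : s = s') by (apply (rel_mono (r := S)); congruence).
  assert (Euu : u = u') by (apply (pullback_ext HP); congruence).
  congruence.
Qed.

Lemma papp_left {T : C} (x y : Hom T X) : relates R x y -> papp_p x y y x.
Proof.
  intros [r [Ex Ey]].
  destruct (pullback_pair HP (q1 := idm _) (q2 := s0 S \o' d1 R)) as [sg [E1 E2]].
  { rewrite comp_id_r, comp_assoc, d0s0, comp_id_l. reflexivity. }
  pose proof (papp_intro (sg \o' r)) as H.
  cat_simpl (E1, E2, proj1 Hp sg E1 E2, d1s0 S, Ex, Ey) in H. exact H.
Qed.

Lemma papp_right {T : C} (y z : Hom T X) : relates S y z -> papp_p y y z z.
Proof.
  intros [s [Ey Ez]].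
  destruct (pullback_pair HP (q1 := s0 R \o' d0 S) (q2 := idm _)) as [sg [E1 E2]].
  { rewrite comp_id_r, comp_assoc, d1s0, comp_id_l. reflexivity. }
  pose proof (papp_intro (sg \o' s)) as H.
  cat_simpl (E1, E2, proj2 Hp sg E1 E2, d0s0 R, d1s0 R, Ey, Ez) in H. exact H.
Qed.

Lemma papp_left_unique {T : C} (x y w : Hom T X) : papp_p x y y w -> w = x.
Proof.
  intros H. exact (papp_unique H (papp_left (proj1 (papp_relates H)))).
Qed.

Lemma papp_right_unique {T : C} (y z w : Hom T X) : papp_p y y z w -> w = z.
Proof.
  intros H. exact (papp_unique H (papp_right (proj2 (papp_relates H)))).
Qed.

Lemma connector_coherent :
  relates S (d0 R \o' pi1) p /\ relates R p (d1 S \o' pi2).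
Proof.
  split; apply (maltsev_relates HS (d1s0 R) HP); intros u E1 E2.
  - cat_simpl (E1, proj1 Hp u E1 E2). apply relates_refl.
  - cat_simpl (E1, E2, proj2 Hp u E1 E2, d0s0 R). apply relates_d0_d1.
  - cat_simpl (E1, E2, proj1 Hp u E1 E2, d1s0 S). apply relates_d0_d1.
  - cat_simpl (E2, proj2 Hp u E1 E2). apply relates_refl.
Qed.

Lemma papp_coherent {T : C} (x y z v : Hom T X) :
  papp_p x y z v -> relates S x v /\ relates R v z.
Proof.
  intros H. destruct (papp_elim H) as [u [Ex [_ [Ez Ev]]]].
  destruct connector_coherent as [HSx HRz].
  pose proof (relates_comp u HSx) as HSu. pose proof (relates_comp u HRz) as HRu.
  cat_simpl (Ex, Ev) in HSu. cat_simpl (Ez, Ev) in HRu. auto.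
Qed.

Lemma papp_assoc_left_generic {G : C} (g1 : Hom G P) (g2 : Hom G (rel_obj S)) :
  is_pullback (d1 S \o' pi2) (d0 S) g1 g2 ->
  exists w : Hom G X,
    papp_p (d0 R \o' (pi1 \o' g1)) (d1 R \o' (pi1 \o' g1)) (d1 S \o' g2) w /\
    papp_p (p \o' g1) (d1 S \o' (pi2 \o' g1)) (d1 S \o' g2) w.
Proof.
  intros HG.
  pose proof (papp_intro g1) as Hv.
  assert (Hzt : relates S (d1 S \o' (pi2 \o' g1)) (d1 S \o' g2)).
  { exists g2. split; [| reflexivity]. rewrite comp_assoc. exact (eq_sym (proj1 HG)). }
  destruct (papp_relates Hv) as [Hxy Hyz].
  destruct (papp_total Hxy (sigma_relation_transitive HS Hyz Hzt)) as [w Hw].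
  destruct (papp_total (proj2 (papp_coherent Hv)) Hzt) as [w' Hw'].
  exists w. split; [exact Hw |].
  replace w with w'; [exact Hw' |].
  destruct (pullback_pair HP (q1 := s0 R) (q2 := s0 S)) as [tau [Et1 Et2]].
  { rewrite d1s0, d0s0. reflexivity. }
  assert (Hgt : (d1 S \o' pi2) \o' tau = idm X) by (cat_simpl (Et2, d1s0 S); reflexivity).
  apply (maltsev_ext HS Hgt HG); intros u E1 E2.
  - pose proof (papp_intro (idm P)) as Hp0. cat_norm_in Hp0.
    pose proof (papp_comp u Hw) as Hwu. pose proof (papp_comp u Hw') as Hw'u.
    cat_simpl (E1, E2, d1s0 S) in Hwu. cat_simpl (E1, E2, d1s0 S) in Hw'u.
    rewrite (papp_left_unique Hw'u). exact (papp_unique Hp0 Hwu).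
  - pose proof (papp_comp u Hv) as Hvu.
    pose proof (papp_comp u Hw) as Hwu. pose proof (papp_comp u Hw') as Hw'u.
    cat_simpl (E1, E2, Et1, Et2, d0s0 R, d1s0 R, d1s0 S) in Hvu.
    cat_simpl (E1, E2, Et1, Et2, d0s0 R, d1s0 R, d1s0 S) in Hwu.
    cat_simpl (E1, E2, Et1, Et2, d0s0 R, d1s0 R, d1s0 S) in Hw'u.
    rewrite (papp_right_unique Hvu) in Hw'u.
    rewrite (papp_right_unique Hw'u), (papp_right_unique Hwu). reflexivity.
Qed.

Lemma papp_assoc_left {T : C} (x y z t v w : Hom T X) :
  relates S z t -> papp_p x y z v -> papp_p x y t w -> papp_p v z t w.
Proof.
  intros [s [Ez Et]] Hv Hw.
  destruct (papp_elim Hv) as [u [Eux [Euy [Euz Euv]]]].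
  destruct (proj2 FC _ _ _ (d1 S \o' pi2) (d0 S)) as [G [g1 [g2 HG]]].
  destruct (papp_assoc_left_generic HG) as [wG [HwG HwG']].
  destruct (pullback_pair HG (q1 := u) (q2 := s)) as [k [Ek1 Ek2]].
  { rewrite <- comp_assoc, Euz, Ez. reflexivity. }
  pose proof (papp_comp k HwG) as Hk. pose proof (papp_comp k HwG') as Hk'.
  cat_simpl (Ek1, Ek2, Eux, Euy, Euz, Euv, Et) in Hk.
  cat_simpl (Ek1, Ek2, Eux, Euy, Euz, Euv, Et) in Hk'.
  rewrite (papp_unique Hw Hk). exact Hk'.
Qed.

Lemma papp_assoc_right_generic {RR : C} (h1 h2 : Hom RR (rel_obj R))
    {G : C} (g1 : Hom G RR) (g2 : Hom G (rel_obj S)) :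
  is_transitive R -> is_pullback (d1 R) (d0 R) h1 h2 ->
  is_pullback (d1 R \o' h2) (d0 S) g1 g2 ->
  exists v w : Hom G X,
    papp_p (d1 R \o' (h1 \o' g1)) (d1 R \o' (h2 \o' g1)) (d1 S \o' g2) v /\
    papp_p (d0 R \o' (h1 \o' g1)) (d1 R \o' (h2 \o' g1)) (d1 S \o' g2) w /\
    papp_p (d0 R \o' (h1 \o' g1)) (d1 R \o' (h1 \o' g1)) v w.
Proof.
  intros HR HRR HG.
  assert (Hxy : relates R (d0 R \o' (h1 \o' g1)) (d1 R \o' (h1 \o' g1)))
    by (exists (h1 \o' g1); split; reflexivity).
  assert (Hyz : relates R (d1 R \o' (h1 \o' g1)) (d1 R \o' (h2 \o' g1))).
  { exists (h2 \o' g1). split; [| reflexivity].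
    rewrite !comp_assoc, (proj1 HRR). reflexivity. }
  assert (Hzt : relates S (d1 R \o' (h2 \o' g1)) (d1 S \o' g2)).
  { exists g2. split; [| reflexivity]. rewrite comp_assoc. exact (eq_sym (proj1 HG)). }
  destruct (papp_total Hyz Hzt) as [v Hv].
  destruct (papp_total (HR _ _ _ _ Hxy Hyz) Hzt) as [w Hw].
  destruct (papp_total Hxy (proj1 (papp_coherent Hv))) as [w' Hw'].
  exists v, w. split; [exact Hv | split; [exact Hw |]].
  replace w with w'; [exact Hw' |].
  destruct (pullback_pair HRR (q1 := s0 R) (q2 := s0 R)) as [dl [Ed1 Ed2]].
  { rewrite d1s0, d0s0. reflexivity. }
  assert (Hgt : (d1 R \o' h2) \o' dl = idm X) by (cat_simpl (Ed2, d1s0 R); reflexivity).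
  apply (maltsev_ext HS Hgt HG); intros u E1 E2;
    pose proof (papp_comp u Hv) as Hvu;
    pose proof (papp_comp u Hw) as Hwu; pose proof (papp_comp u Hw') as Hw'u.
  - cat_simpl (E1, E2, d1s0 S) in Hvu. cat_simpl (E1, E2, d1s0 S) in Hwu.
    cat_simpl (E1, E2, d1s0 S) in Hw'u.
    rewrite (papp_left_unique Hvu) in Hw'u.
    rewrite (papp_left_unique Hw'u), (papp_left_unique Hwu). reflexivity.
  - cat_simpl (E1, E2, Ed1, Ed2, d0s0 R, d1s0 R) in Hvu.
    cat_simpl (E1, E2, Ed1, Ed2, d0s0 R, d1s0 R) in Hwu.
    cat_simpl (E1, E2, Ed1, Ed2, d0s0 R, d1s0 R) in Hw'u.
    rewrite (papp_right_unique Hvu) in Hw'u.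
    rewrite (papp_right_unique Hw'u), (papp_right_unique Hwu). reflexivity.
Qed.

Lemma papp_assoc_right {T : C} (x y z t v w : Hom T X) :
  is_transitive R -> relates R x y -> relates R y z -> relates S z t ->
  papp_p y z t v -> papp_p x z t w -> papp_p x y v w.
Proof.
  intros HR [r1 [Ex Ey]] [r2 [Ey' Ez]] [s [Ez' Et]] Hv Hw.
  destruct (proj2 FC _ _ _ (d1 R) (d0 R)) as [RR [h1 [h2 HRR]]].
  destruct (proj2 FC _ _ _ (d1 R \o' h2) (d0 S)) as [G [g1 [g2 HG]]].
  destruct (papp_assoc_right_generic HR HRR HG) as [vG [wG [HvG [HwG HwG']]]].
  destruct (pullback_pair HRR (q1 := r1) (q2 := r2)) as [kR [EkR1 EkR2]];
    [congruence |].
  destruct (pullback_pair HG (q1 := kR) (q2 := s)) as [k [Ek1 Ek2]].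
  { rewrite <- comp_assoc, EkR2, Ez, Ez'. reflexivity. }
  pose proof (papp_comp k HvG) as Hvk.
  pose proof (papp_comp k HwG) as Hwk. pose proof (papp_comp k HwG') as Hw'k.
  cat_simpl (Ek1, Ek2, EkR1, EkR2, Ex, Ey, Ez, Et) in Hvk.
  cat_simpl (Ek1, Ek2, EkR1, EkR2, Ex, Ey, Ez, Et) in Hwk.
  cat_simpl (Ek1, Ek2, EkR1, EkR2, Ex, Ey, Ez, Et) in Hw'k.
  rewrite (papp_unique Hv Hvk), (papp_unique Hw Hwk). exact Hw'k.
Qed.

End Connector.

End SigmaMaltsev.
End FinitelyComplete.
End Category.

Theorem proposition3p7 (C : Cat) (Sig : SEClass C) :
  finitely_complete C -> fibrational Sig -> sigma_maltsev Sig ->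
  forall (X : C) (R S : RRel X), sigma_relation Sig S ->
  forall (P : C) (pi1 : Hom P (rel_obj R)) (pi2 : Hom P (rel_obj S)),
    is_pullback (d1 R) (d0 S) pi1 pi2 ->
  forall p : Hom P X, is_connector pi1 pi2 p ->
  (* (1) coherence *)
  (forall (T : C) (x y z v : Hom T X),
      papp pi1 pi2 p x y z v -> relates S x v /\ relates R v z) /\
  (* (2) left associativity: p(p(xRySz) R z S t) = p(xRySt) *)
  (forall (T : C) (x y z t v w : Hom T X),
      relates R x y -> relates S y z -> relates S z t ->
      papp pi1 pi2 p x y z v -> papp pi1 pi2 p x y t w ->
      papp pi1 pi2 p v z t w) /\
  (* (3) right associativity, for R a preorder: p(xRy S p(yRzSt)) = p(xRzSt) *)
  (is_preorder R ->
   forall (T : C) (x y z t v w : Hom T X),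
      relates R x y -> relates R y z -> relates S z t ->
      papp pi1 pi2 p y z t v -> papp pi1 pi2 p x z t w ->
      papp pi1 pi2 p x y v w).
Proof.
  intros FC Fib HM X R S HS P pi1 pi2 HP p Hp.
  split; [| split].
  - intros T x y z v. apply (papp_coherent FC Fib HM HS HP Hp).
  - intros T x y z t v w _ _. apply (papp_assoc_left FC Fib HM HS HP Hp).
  - intros HR T x y z t v w. apply (papp_assoc_right FC Fib HM HS HP Hp HR).
Qed.
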